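(* Let $p$ be a smooth function on $T^\ast(\mathbb{R}^n)\smallsetminus0$ with $\operatorname{Re}p=\xi_1$, and let $\gamma=[a,b]\times\{w_0\}$ be a bicharacteristic of $\operatorname{Re}p=\xi_1$. If $\operatorname{Im}p$ strongly changes sign from $-$ to $+$ on $\gamma$, then $L_p(\gamma)$ is defined and $0\le L_p(\gamma)\le|\gamma|$. Moreover, for every $\delta,\varepsilon>0$ there exists a bicharacteristic $\tilde\gamma=[\tilde a,\tilde b]\times\{\tilde w\}$ of $\operatorname{Re}p$ with $a-\varepsilon<\tilde a\le\tilde b<b+\varepsilon$ and $|\tilde w-w_0|<\varepsilon$ such that $\operatorname{Im}p$ strongly changes sign from $-$ to $+$ on $\tilde\gamma$ and $|\tilde\gamma|<L_p(\gamma)+\delta$.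
   Context: Write points of $T^\ast(\mathbb{R}^n)$ as $(x_1,x',\xi_1,\xi')$. A bicharacteristic of $\xi_1$ is $\gamma=[a,b]\times\{w_0\}=\{(t,x',0,\xi'):a\le t\le b\}$, $w_0=(x',0,\xi')$; write $g(t,w)$; $|\gamma|=b-a$. For $\gamma_j=[a_j,b_j]\times\{w_j\}$, $\gamma_j\dashrightarrow\gamma$ means $\liminf a_j\ge a$, $\limsup b_j\le b$, $w_j\to w_0$. $\operatorname{Im}p$ strongly changes sign from $-$ to $+$ on $[a,b]\times\{w_0\}$ if $\operatorname{Im}p(t,w_0)=0$ for $a\le t\le b$ and for every $\varepsilon>0$ there exist $a-\varepsilon<s_-<a$, $b<s_+<b+\varepsilon$ with $\operatorname{Im}p(s_-,w_0)<0<\operatorname{Im}p(s_+,w_0)$. If some sequence of bicharacteristics $\gamma_j$ of $\xi_1$ with this sign change satisfies $\gamma_j\dashrightarrow\gamma$, then $L_p(\gamma)=\inf\liminf_j|\gamma_j|$ over all such sequences (otherwise undefined). *)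

From HB Require Import structures.
From mathcomp Require Import all_boot all_order all_algebra.
From mathcomp Require Import all_classical all_reals all_analysis.
From mathcomp Require Import complex.
Set Implicit Arguments. Unset Strict Implicit. Unset Printing Implicit Defensive.
Import Order.TTheory GRing.Theory Num.Theory.
Import numFieldNormedType.Exports.
Local Open Scope classical_set_scope.
Local Open Scope ring_scope.

Definition cotangent (R : realType) (n : nat) := ('rV[R]_n * 'rV[R]_n)%type.

Definition Tstar0 (R : realType) (n : nat) : set (cotangent R n) :=
  [set z | z.2 != 0].

Fixpoint smoothk (R : realType) (V : normedModType R) (U : set V) (k : nat)
  (f : V -> R) : Prop :=
  match k with
  | 0 => forall z, U z -> {for z, continuous f}
  | k'.+1 => (forall z, U z -> differentiable f z) /\
             (forall v : V, smoothk U k' (fun z => 'D_v f z))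
  end.

Definition smooth_on (R : realType) (V : normedModType R) (U : set V)
  (f : V -> R) : Prop := open U /\ forall k, smoothk U k f.

Definition csmooth_on (R : realType) (V : normedModType R) (U : set V)
  (p : V -> R[i]) : Prop :=
  smooth_on U (fun z => complex.Re (p z)) /\ smooth_on U (fun z => complex.Im (p z)).

(* w = (x', xi') standing for (x', 0, xi'); n = m.+1 *)
Definition wpt (R : realType) (m : nat) := ('rV[R]_m * 'rV[R]_m)%type.

Definition gpt (R : realType) (m : nat) (t : R) (w : wpt R m) : cotangent R m.+1 :=
  (row_mx (\row_(_ < 1) t) w.1, row_mx (0 : 'rV[R]_1) w.2).

(* [a,b] x {w} is a bicharacteristic of xi_1 in T^*(R^n) \ 0 *)
Definition bichar (R : realType) (m : nat) (a b : R) (w : wpt R m) : Prop :=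
  a <= b /\ w.2 != 0.

Definition strong_sign_change (R : realType) (m : nat)
  (p : cotangent R m.+1 -> R[i]) (a b : R) (w : wpt R m) : Prop :=
  (forall t, a <= t <= b -> complex.Im (p (gpt t w)) = 0) /\
  (forall e : R, 0 < e -> exists sm sp : R,
     a - e < sm < a /\ b < sp < b + e /\
     complex.Im (p (gpt sm w)) < 0 /\ 0 < complex.Im (p (gpt sp w))).

Definition Lp_set (R : realType) (m : nat) (p : cotangent R m.+1 -> R[i])
  (a b : R) (w : wpt R m) : set (\bar R) :=
  [set l | exists (a_ b_ : nat -> R) (w_ : nat -> wpt R m),
     (forall j, bichar (a_ j) (b_ j) (w_ j) /\
                strong_sign_change p (a_ j) (b_ j) (w_ j)) /\
     (a%:E <= limn_einf (fun j => (a_ j)%:E))%E /\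
     (limn_esup (fun j => (b_ j)%:E) <= b%:E)%E /\
     (w_ @ \oo --> w) /\
     l = limn_einf (fun j => (b_ j - a_ j)%:E)].

Definition Lp_defined (R : realType) (m : nat) (p : cotangent R m.+1 -> R[i])
  (a b : R) (w : wpt R m) : Prop := Lp_set p a b w !=set0.

Definition Lp (R : realType) (m : nat) (p : cotangent R m.+1 -> R[i])
  (a b : R) (w : wpt R m) : \bar R := ereal_inf (Lp_set p a b w).

Definition wdist (R : realType) (m : nat) (w w' : wpt R m) : R :=
  Num.sqrt (\sum_(i < m) (w.1 ord0 i - w'.1 ord0 i) ^+ 2 +
            \sum_(i < m) (w.2 ord0 i - w'.2 ord0 i) ^+ 2).

(* The constant sequence gamma_j = gamma is admissible, so L_p(gamma) is the
   infimum of a nonempty set of nonnegative numbers containing |gamma|.  For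
   the approximation, pick an admissible sequence whose liminf of lengths is
   below L_p(gamma) + delta: eventually its endpoints and base points are
   eps-close to those of gamma, and infinitely often its length is below
   L_p(gamma) + delta, so some single member gamma_j does the job. *)
From HB Require Import structures.
From mathcomp Require Import all_boot all_order all_algebra.
From mathcomp Require Import all_classical all_reals all_analysis.
From mathcomp Require Import complex.
From mathcomp Require Import lra.
Import Order.TTheory GRing.Theory Num.Theory.
Import numFieldNormedType.Exports.
Local Open Scope classical_set_scope.
Local Open Scope ring_scope.

Section limn_einf_near.
Context {R : realType}.
Local Open Scope ereal_scope.
Implicit Types (u : (\bar R)^nat) (c : \bar R).

Lemma limn_einfE u : limn_einf u = ereal_sup (range (einfs u)).
Proof.
rewrite limn_einf_lim; apply/cvg_lim => //.
exact/ereal_nondecreasing_cvgn/nondecreasing_einfs.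
Qed.

Lemma limn_einf_cst c : limn_einf (fun=> c) = c.
Proof. by have [-> _] := cvg_limn_einf_sup (cvg_cst c). Qed.

Lemma limn_esup_cst c : limn_esup (fun=> c) = c.
Proof. by have [_ ->] := cvg_limn_einf_sup (cvg_cst c). Qed.

Lemma limn_einf_ge u c : (forall n, c <= u n) -> c <= limn_einf u.
Proof.
move=> cu; have cu0 : c <= einfs u 0%N.
  by apply: le_ereal_inf_tmp => _ [n _ <-]; exact: cu.
apply: (le_trans cu0); rewrite limn_einfE.
by apply: ereal_sup_ubound; exists 0%N.
Qed.

Lemma lt_limn_einf_near u c : c < limn_einf u -> \forall n \near \oo, c < u n.
Proof.
rewrite limn_einfE => /ereal_sup_gt [_ [N _ <-] cN].
exists N => // n /= Nn; apply: (lt_le_trans cN).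
by apply: ereal_inf_lbound; exists n.
Qed.

Lemma limn_esup_lt_near u c : limn_esup u < c -> \forall n \near \oo, u n < c.
Proof.
rewrite -lteN2 -limn_einfN => /lt_limn_einf_near.
by apply: filterS => n /=; rewrite lteN2.
Qed.

(* liminf u < c means u drops below c infinitely often, hence on any
   eventually-true condition *)
Lemma limn_einf_lt_near u c (P : nat -> Prop) :
  limn_einf u < c -> (\forall n \near \oo, P n) -> exists n, P n /\ u n < c.
Proof.
move=> uc [N _ PN].
have : einfs u N < c.
  apply: le_lt_trans uc; rewrite limn_einfE.
  by apply: ereal_sup_ubound; exists N.
by move=> /ereal_inf_lt [_ [n /= Nn <-] unc]; exists n; split => //; exact: PN.
Qed.

End limn_einf_near.

Section wdist_near.
Context {R : realType} {m : nat}.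

Lemma sum_sqr_sub_le_ball (f g : 'rV[R]_m) (r : R) :
  ball f r g -> \sum_(i < m) (g ord0 i - f ord0 i) ^+ 2 <= m%:R * r ^+ 2.
Proof.
move=> [_ fg]; rewrite -[m in m%:R]card_ord mulr_natl -sumr_const.
apply: ler_sum => i _; rewrite -sqrrN opprB.
by move: (fg ord0 i); rewrite /ball /= ltr_norml => /andP[? ?]; nra.
Qed.

Lemma wdist_lt_ball (w w' : wpt R m) (eps : R) :
  0 < eps -> ball w' (eps / (m%:R + 1)) w -> wdist w w' < eps.
Proof.
move=> eps0 [/sum_sqr_sub_le_ball le1 /sum_sqr_sub_le_ball le2].
set r := eps / (m%:R + 1) in le1 le2.
have m1 : 0 < m%:R + 1 :> R by rewrite ltr_wpDl.
have epsr : eps = r * (m%:R + 1) by rewrite /r mulfVK // gt_eqF.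
rewrite /wdist -[X in _ < X]gtr0_norm // -sqrtr_sqr ltr_sqrt ?exprn_gt0 //.
apply: (le_lt_trans (lerD le1 le2)).
have r0 : 0 < r by rewrite divr_gt0.
have : 0 <= m%:R :> R by [].
by rewrite epsr; nra.
Qed.

Lemma cvg_wdist_near (w_ : nat -> wpt R m) (w0 : wpt R m) (eps : R) :
  0 < eps -> w_ @ \oo --> w0 -> \forall n \near \oo, wdist (w_ n) w0 < eps.
Proof.
move=> eps0 /cvg_ballP /(_ (eps / (m%:R + 1))).
rewrite divr_gt0 ?ltr_wpDl // => /(_ isT).
by apply: filterS => n; exact: wdist_lt_ball.
Qed.

End wdist_near.

Section Lp_properties.
Variables (R : realType) (m : nat) (p : cotangent R m.+1 -> R[i]).
Variables (a b : R) (w0 : wpt R m).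
Local Open Scope ereal_scope.

Lemma Lp_set_ge0 l : Lp_set p a b w0 l -> 0 <= l.
Proof.
move=> [a_ [b_ [w_ [adm [_ [_ [_ ->]]]]]]].
apply: limn_einf_ge => n; rewrite lee_fin subr_ge0.
by have [[]] := adm n.
Qed.

Lemma Lp_ge0 : 0 <= Lp p a b w0.
Proof. by apply: le_ereal_inf_tmp => l; exact: Lp_set_ge0. Qed.

Hypotheses (hb : bichar a b w0) (hs : strong_sign_change p a b w0).

Lemma Lp_set_length : Lp_set p a b w0 (b - a)%:E.
Proof.
exists (fun=> a), (fun=> b), (fun=> w0).
rewrite !limn_einf_cst limn_esup_cst.
by do !split => //; exact: cvg_cst.
Qed.

Lemma Lp_le_length : Lp p a b w0 <= (b - a)%:E.
Proof. exact/ereal_inf_lbound/Lp_set_length. Qed.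

Lemma Lp_fin_num : Lp p a b w0 \is a fin_num.
Proof. by rewrite ge0_fin_numE ?Lp_ge0 // (le_lt_trans Lp_le_length) ?ltry. Qed.

Lemma Lp_approximation (delta eps : R) : (0 < delta)%R -> (0 < eps)%R ->
  exists (at_ bt : R) (wt : wpt R m),
    bichar at_ bt wt /\
    (a - eps < at_)%R /\ (at_ <= bt)%R /\ (bt < b + eps)%R /\
    (wdist wt w0 < eps)%R /\
    strong_sign_change p at_ bt wt /\
    (bt - at_)%:E < Lp p a b w0 + delta%:E.
Proof.
move=> delta0 eps0.
have : Lp p a b w0 < Lp p a b w0 + delta%:E.
  by rewrite -(fineK Lp_fin_num) -EFinD lte_fin ltrDl.
move=> /ereal_inf_lt [_ [a_ [b_ [w_ [adm [ha [hb' [hw ->]]]]]]] short].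
have near_a : \forall n \near \oo, (a - eps)%:E < (a_ n)%:E.
  by apply/lt_limn_einf_near/(lt_le_trans _ ha); rewrite lte_fin ltrBlDr ltrDl.
have near_b : \forall n \near \oo, (b_ n)%:E < (b + eps)%:E.
  by apply/limn_esup_lt_near/(le_lt_trans hb'); rewrite lte_fin ltrDl.
have near_w := cvg_wdist_near _ _ _ eps0 hw.
have [n [[ha_n [hb_n hw_n]] hshort]] :=
  limn_einf_lt_near _ _ _ short (filterI near_a (filterI near_b near_w)).
have [[hab hwn] hsn] := adm n.
move: ha_n hb_n; rewrite !lte_fin => ha_n hb_n.
by exists (a_ n), (b_ n), (w_ n).
Qed.

End Lp_properties.

Theorem corollary2p12 (R : realType) (m : nat)
  (p : cotangent R m.+1 -> R[i]) (a b : R) (w0 : wpt R m) :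
  csmooth_on (@Tstar0 R m.+1) p ->
  (forall z, @Tstar0 R m.+1 z -> complex.Re (p z) = z.2 ord0 ord0) ->
  bichar a b w0 ->
  strong_sign_change p a b w0 ->
  Lp_defined p a b w0 /\
  (0 <= Lp p a b w0)%E /\ (Lp p a b w0 <= (b - a)%:E)%E /\
  (forall delta eps : R, 0 < delta -> 0 < eps ->
     exists (at_ bt : R) (wt : wpt R m),
       bichar at_ bt wt /\
       a - eps < at_ /\ at_ <= bt /\ bt < b + eps /\
       wdist wt w0 < eps /\
       strong_sign_change p at_ bt wt /\
       ((bt - at_)%:E < Lp p a b w0 + delta%:E)%E).
Proof.
move=> _ _ hb hs; split; first by exists (b - a)%:E; exact: Lp_set_length.
split; first exact: Lp_ge0.
split; first exact: Lp_le_length.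
exact: Lp_approximation.
Qed.
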